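(* Let $\lambda\in[0,1]$ and $\kappa=(1-\lambda)/(1-\gamma\lambda)$. Under the standing assumptions below, the map $\theta\mapsto-\bar x(\theta)$ (the negative of the steady-state expected TD($\lambda$) update) is a gradient splitting of the quadratic $$f^{(\lambda)}(\theta)=(1-\gamma\kappa)\|V_\theta-V_{\theta^*_\lambda}\|_D^2+(1-\lambda)\sum_{m=0}^\infty\lambda^m\gamma^{m+1}\|V_\theta-V_{\theta^*_\lambda}\|_{{\rm Dir},m+1}^2 .$$ Explicitly, $-\bar x(\theta)=B_\lambda(\theta-\theta^*_\lambda)$ and $f^{(\lambda)}(\theta)=(\theta-\theta^*_\lambda)^TB_\lambda(\theta-\theta^*_\lambda)$ with $B_\lambda=\Phi^TD\Phi-(1-\lambda)\sum_{m\ge0}\lambda^m\gamma^{m+1}\Phi^TDP^{m+1}\Phi$.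
   Context: Setting: finite state space $\mathcal S=[n]$, a fixed policy inducing a transition matrix $P$ which is irreducible and aperiodic with unique stationary distribution $\pi$ (row vector), $D=\mathrm{diag}(\pi)$; bounded deterministic rewards, $r(s,s')=\sum_a\mu(s,a)r(s,a,s')$, $R(s)=\sum_{s'}P(s,s')r(s,s')$ (vector $R\in\mathbb{R}^n$); discount $\gamma\in(0,1)$. Features $\Phi\in\mathbb{R}^{n\times K}$ of full column rank with rows $\phi(s)^T$, $\|\phi(s)\|_2\le1$, $V_\theta=\Phi\theta$. Norms: $\|V\|_D^2=\sum_s\pi_sV(s)^2$; $k$-step Dirichlet seminorm $\|V\|_{{\rm Dir},k}^2=\frac12\sum_{s,s'}\pi_s(P^k)(s,s')(V(s')-V(s))^2$. The operator $T^{(\lambda)}:\mathbb{R}^n\to\mathbb{R}^n$ is $T^{(\lambda)}J=(1-\lambda)\sum_{m\ge0}\lambda^m\sum_{t=0}^m\gamma^tP^tR+(1-\lambda)\sum_{m\ge0}\lambda^m\gamma^{m+1}P^{m+1}J$. The mean TD($\lambda$) direction is $\bar x(\theta)=\Phi^TD\big(T^{(\lambda)}(\Phi\theta)-\Phi\theta\big)$ (the steady-state mean of $\delta_tz_t$ with eligibility trace $z_t=\sum_{k=-\infty}^{t}(\gamma\lambda)^k\phi(s_{t-k})$), and $\theta^*_\lambda$ is the unique vector with $\bar x(\theta^*_\lambda)=0$. Gradient splitting: for symmetric PSD $A$ and $f(\theta)=(\theta-a)^TA(\theta-a)$, a linear map $h(\theta)=B(\theta-a)$ is a gradient splitting of $f$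 if $B+B^T=2A$. *)

From HB Require Import structures.
From mathcomp Require Import all_boot all_order all_algebra.
From mathcomp Require Import all_classical all_reals all_analysis.
Set Implicit Arguments. Unset Strict Implicit. Unset Printing Implicit Defensive.
Import Order.TTheory GRing.Theory Num.Theory numFieldNormedType.Exports.
Local Open Scope ring_scope.

Section TD.
Variable R : realType.

Definition rseries (u : nat -> R) : R := limn (series u).

Definition mseries m n (F : nat -> 'M[R]_(m, n)) : 'M[R]_(m, n) :=
  \matrix_(i, j) rseries (fun k => F k i j).

Definition stochastic n (P : 'M[R]_n) :=
  (forall i j, 0 <= P i j) /\ (forall i, \sum_j P i j = 1).
Definition irreducible n (P : 'M[R]_n) :=
  forall i j, exists k : nat, 0 < (P ^+ k) i j.
(* period of every state is 1: the gcd of the return times is 1 *)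
Definition aperiodic n (P : 'M[R]_n) :=
  forall i : 'I_n, forall d : nat,
    (forall k : nat, (0 < k)%N -> 0 < (P ^+ k) i i -> (d %| k)%N) -> d = 1%N.
Definition stationary_distribution n (P : 'M[R]_n) (pi : 'rV[R]_n) :=
  (forall s, 0 <= pi 0 s) /\ \sum_s pi 0 s = 1 /\ pi *m P = pi.

Definition normD2 n (pi : 'rV[R]_n) (V : 'cV[R]_n) : R :=
  \sum_s pi 0 s * V s 0 ^+ 2.
Definition dir2 n (P : 'M[R]_n) (pi : 'rV[R]_n) (k : nat) (V : 'cV[R]_n) : R :=
  2^-1 * \sum_s \sum_s' pi 0 s * (P ^+ k) s s' * (V s' 0 - V s 0) ^+ 2.

Definition Rvec n (P r : 'M[R]_n) : 'cV[R]_n := \col_s \sum_s' P s s' * r s s'.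

(* The TD(lambda) operator.  For lambda = 1 the formula of the paper is read as
   its limit (standard TD(1) operator): T^(1) J = sum_t gamma^t P^t R. *)
Definition Tlam n (P : 'M[R]_n) (Rv : 'cV[R]_n) (gamma lambda : R) (J : 'cV[R]_n)
  : 'cV[R]_n :=
  (if lambda < 1 then
     (1 - lambda) *: mseries (fun m => lambda ^+ m *:
        \sum_(t < m.+1) (gamma ^+ t *: (P ^+ t *m Rv)))
   else mseries (fun t => gamma ^+ t *: (P ^+ t *m Rv)))
  + (1 - lambda) *: mseries (fun m => (lambda ^+ m * gamma ^+ m.+1) *: (P ^+ m.+1 *m J)).

Definition xbar n K (P : 'M[R]_n) (pi : 'rV[R]_n) (Rv : 'cV[R]_n) (Phi : 'M[R]_(n, K))
  (gamma lambda : R) (theta : 'cV[R]_K) : 'cV[R]_K :=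
  Phi^T *m diag_mx pi *m (Tlam P Rv gamma lambda (Phi *m theta) - Phi *m theta).

Definition flam n K (P : 'M[R]_n) (pi : 'rV[R]_n) (Phi : 'M[R]_(n, K))
  (gamma lambda : R) (thetas theta : 'cV[R]_K) : R :=
  let kappa := (1 - lambda) / (1 - gamma * lambda) in
  let W := Phi *m theta - Phi *m thetas in
  (1 - gamma * kappa) * normD2 pi W
  + (1 - lambda) * rseries (fun m => lambda ^+ m * gamma ^+ m.+1 * dir2 P pi m.+1 W).

Definition Blam n K (P : 'M[R]_n) (pi : 'rV[R]_n) (Phi : 'M[R]_(n, K))
  (gamma lambda : R) : 'M[R]_K :=
  Phi^T *m diag_mx pi *m Phi
  - (1 - lambda) *: mseries (fun m => (lambda ^+ m * gamma ^+ m.+1) *: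
       (Phi^T *m diag_mx pi *m P ^+ m.+1 *m Phi)).

Definition qform K (A : 'M[R]_K) (x : 'cV[R]_K) : R := (x^T *m A *m x) 0 0.

Definition psd K (A : 'M[R]_K) := A^T = A /\ forall x, 0 <= qform A x.
Definition gradient_splitting K (h : 'cV[R]_K -> 'cV[R]_K) (f : 'cV[R]_K -> R) :=
  exists (A : 'M[R]_K) (a : 'cV[R]_K) (B : 'M[R]_K),
    psd A /\ (forall theta, f theta = qform A (theta - a)) /\
    (forall theta, h theta = B *m (theta - a)) /\ B + B^T = 2%:R *: A.

End TD.

(* Write L = Phi^T D with D = diag(pi), c_m = lambda^m gamma^(m+1), and let
   Q = sum_m c_m P^(m+1) be the discounted occupancy matrix; Q converges
   entrywise because P^(m+1) is stochastic and c_m <= (lambda gamma)^m.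
   1. The TD(lambda) operator is affine in J with linear part (1-lambda) Q J,
      hence xbar(theta) = xbar_0 - B theta with B = L Phi - (1-lambda) L Q Phi,
      which is exactly Blam; xbar(a) = 0 at the fixed point a then gives
      -xbar(theta) = B (theta - a).
   2. For a stationary pi and a stochastic P,
         ||W||_{Dir,k}^2 = ||W||_D^2 - W^T D P^k W,
      so summing against the weights c_m (whose sum is gamma/(1-lambda gamma))
      turns f^(lambda) into the quadratic form of B at theta - a.
   3. f^(lambda) is nonnegative (each term is), and a map theta |-> B(theta-a)
      whose quadratic form (theta-a)^T B (theta-a) is nonnegative is a gradient
      splitting of that form with A = (B + B^T)/2.
   The file first develops real and matrix series, then powers of stochastic
   matrices and the Dirichlet identity, then the TD-specific facts. *)
From Pilot Require Import Defs.
From HB Require Import structures.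
From mathcomp Require Import all_boot all_order all_algebra.
From mathcomp Require Import all_classical all_reals all_analysis.
From mathcomp Require Import ring lra.
Import Order.TTheory GRing.Theory Num.Theory numFieldNormedType.Exports.
Set Implicit Arguments. Unset Strict Implicit.
Local Open Scope ring_scope.

Section RealSeries.
Variable R : realType.
Implicit Types (u v : nat -> R) (a q C : R).

Lemma rseriesD u v : cvgn (series u) -> cvgn (series v) ->
  cvgn (series (fun k => u k + v k)) /\
  rseries (fun k => u k + v k) = rseries u + rseries v.
Proof.
move=> cu cv; have -> : (fun k => u k + v k) = u + v by [].
split; first exact: is_cvg_seriesD.
by rewrite /rseries (lim_seriesD cu cv).
Qed.

Lemma rseriesB u v : cvgn (series u) -> cvgn (series v) ->
  cvgn (series (fun k => u k - v k)) /\
  rseries (fun k => u k - v k) = rseries u - rseries v.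
Proof.
move=> cu cv; have -> : (fun k => u k - v k) = u - v by [].
split; first exact: is_cvg_seriesB.
by rewrite /rseries (lim_seriesB cu cv).
Qed.

Lemma rseriesZ a u : cvgn (series u) ->
  cvgn (series (fun k => a * u k)) /\ rseries (fun k => a * u k) = a * rseries u.
Proof.
move=> cu; have -> : (fun k => a * u k) = a *: u by [].
split; first exact: is_cvg_seriesZ.
by rewrite /rseries (lim_seriesZ a cu).
Qed.

Lemma rseries_sum (I : Type) (s : seq I) (u : I -> nat -> R) :
  (forall i, cvgn (series (u i))) ->
  cvgn (series (fun k => \sum_(i <- s) u i k)) /\
  rseries (fun k => \sum_(i <- s) u i k) = \sum_(i <- s) rseries (u i).
Proof.
move=> cu; elim: s => [|i s [IHc IHe]].
  have zero : series (fun k => \sum_(i <- [::]) u i k) = fun=> 0.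
    by apply/funext => k; rewrite /series /= big1 // => ? _; rewrite big_nil.
  by rewrite /rseries zero big_nil; split; [exact: is_cvg_cst | exact: lim_cst].
under eq_fun do rewrite big_cons.
by have [c e] := rseriesD (cu i) IHc; rewrite big_cons -IHe.
Qed.

Lemma rseries_ge0 u : cvgn (series u) -> (forall k, 0 <= u k) -> 0 <= rseries u.
Proof.
move=> cu u0; apply: limr_ge => //; near=> k.
by rewrite /series /= sumr_ge0.
Unshelve. all: by end_near.
Qed.

Lemma cvg_series_geometric_dom C q u :
  0 <= q < 1 -> (forall k, `|u k| <= C * q ^+ k) -> cvgn (series u).
Proof.
move=> /andP[q0 q1] hu.
have C0 : 0 <= C by have := hu 0%N; rewrite expr0 mulr1; exact: le_trans.
apply: (@normed_cvg _ R^o); rewrite /normed_series_of /=.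
apply: (@series_le_cvg _ _ (geometric C q)).
- by move=> k.
- by move=> k; rewrite /geometric /= mulr_ge0 // exprn_ge0.
- by move=> k.
- by apply: is_cvg_geometric_series; rewrite ger0_norm.
Qed.

Lemma rseries_geometric a q : `|q| < 1 -> rseries (fun k => a * q ^+ k) = a / (1 - q).
Proof. by move=> hq; apply: cvg_lim => //; exact: cvg_geometric_series. Qed.

End RealSeries.

Section MatrixSeries.
Variable R : realType.

Definition mcvg m n (F : nat -> 'M[R]_(m, n)) :=
  forall i j, cvgn (series (fun k => F k i j)).

Lemma mseries_mull m n p (L : 'M[R]_(p, m)) (F : nat -> 'M[R]_(m, n)) :
  mcvg F ->
  mcvg (fun k => L *m F k) /\ Defs.mseries (fun k => L *m F k) = L *m Defs.mseries F.
Proof.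
move=> cF.
have entry i j : cvgn (series (fun k => (L *m F k) i j)) /\
    rseries (fun k => (L *m F k) i j) = (L *m Defs.mseries F) i j.
  under eq_fun do rewrite mxE.
  have [c e] := rseries_sum (index_enum 'I_m)
    (fun a => (rseriesZ (L i a) (cF a j)).1).
  split => //; rewrite e mxE; apply: eq_bigr => a _.
  by rewrite (rseriesZ (L i a) (cF a j)).2 mxE.
split=> [i j|]; first exact: (entry i j).1.
by apply/matrixP => i j; rewrite mxE (entry i j).2.
Qed.

Lemma mseries_mulr m n p (M : 'M[R]_(n, p)) (F : nat -> 'M[R]_(m, n)) :
  mcvg F ->
  mcvg (fun k => F k *m M) /\ Defs.mseries (fun k => F k *m M) = Defs.mseries F *m M.
Proof.
move=> cF.
have entry i j : cvgn (series (fun k => (F k *m M) i j)) /\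
    rseries (fun k => (F k *m M) i j) = (Defs.mseries F *m M) i j.
  under eq_fun do rewrite mxE; under eq_fun do under eq_bigr do rewrite mulrC.
  have [c e] := rseries_sum (index_enum 'I_n)
    (fun a => (rseriesZ (M a j) (cF i a)).1).
  split => //; rewrite e mxE; apply: eq_bigr => a _.
  by rewrite (rseriesZ (M a j) (cF i a)).2 mxE mulrC.
split=> [i j|]; first exact: (entry i j).1.
by apply/matrixP => i j; rewrite mxE (entry i j).2.
Qed.

End MatrixSeries.

Section Stochastic.
Variables (R : realType) (n : nat) (P : 'M[R]_n) (pi : 'rV[R]_n).
Hypothesis hP : stochastic P.

Lemma stochastic_pow k : stochastic (P ^+ k).
Proof.
have [P0 P1] := hP; elim: k => [|k [IH0 IH1]].
  split=> [i j|i]; first by rewrite expr0 mxE ler0n.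
  rewrite expr0 (bigD1 i) //= big1 ?addr0 ?mxE ?eqxx // => j /negPf ji.
  by rewrite mxE eq_sym ji.
split=> [i j|i]; rewrite exprS.
  by rewrite mxE sumr_ge0 // => a _; rewrite mulr_ge0.
under eq_bigr do rewrite mxE.
rewrite exchange_big /=.
by under eq_bigr do rewrite -mulr_sumr IH1 mulr1; exact: P1.
Qed.

Lemma stochastic_pow_entry k i j : 0 <= (P ^+ k) i j <= 1.
Proof.
have [h0 h1] := stochastic_pow k.
by rewrite h0 /= -(h1 i) (bigD1 j) //= lerDl sumr_ge0.
Qed.

Hypothesis hpi : stationary_distribution P pi.

Lemma stationary_pow k : pi *m P ^+ k = pi.
Proof.
have [_ [_ piP]] := hpi; elim: k => [|k IH]; first by rewrite expr0 mulmx1.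
by rewrite exprSr mulmxA IH.
Qed.

Lemma normD2E (W : 'cV[R]_n) : normD2 pi W = (W^T *m diag_mx pi *m W) 0 0.
Proof.
rewrite mul_mx_diag mxE; apply: eq_bigr => a _; rewrite !mxE; ring.
Qed.

Lemma quad_diagE (M : 'M[R]_n) (W : 'cV[R]_n) :
  (W^T *m diag_mx pi *m M *m W) 0 0 = \sum_a \sum_b pi 0 a * M a b * W a 0 * W b 0.
Proof.
rewrite mul_mx_diag mxE exchange_big /=; apply: eq_bigr => b _.
by rewrite mxE mulr_suml; apply: eq_bigr => a _; rewrite !mxE; ring.
Qed.

(* Both "diagonal" halves of the expanded square equal ||W||_D^2, one by
   stationarity of pi and the other since the rows of P^k sum to 1. *)
Lemma dir2E k (W : 'cV[R]_n) :
  dir2 P pi k W = normD2 pi W - (W^T *m diag_mx pi *m P ^+ k *m W) 0 0.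
Proof.
rewrite quad_diagE /dir2.
have [_ rows1] := stochastic_pow k.
have arrive : \sum_s \sum_s' pi 0 s * (P ^+ k) s s' * W s' 0 ^+ 2 = normD2 pi W.
  rewrite exchange_big /=; apply: eq_bigr => b _.
  by rewrite -mulr_suml -[in RHS](stationary_pow k) mxE.
have depart : \sum_s \sum_s' pi 0 s * (P ^+ k) s s' * W s 0 ^+ 2 = normD2 pi W.
  apply: eq_bigr => a _; under eq_bigr do rewrite mulrAC.
  by rewrite -mulr_sumr rows1 mulr1.
have expand : \sum_s \sum_s' pi 0 s * (P ^+ k) s s' * (W s' 0 - W s 0) ^+ 2 =
   (\sum_s \sum_s' pi 0 s * (P ^+ k) s s' * W s' 0 ^+ 2)
 + (\sum_s \sum_s' pi 0 s * (P ^+ k) s s' * W s 0 ^+ 2)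
 - 2 * \sum_s \sum_s' pi 0 s * (P ^+ k) s s' * W s 0 * W s' 0.
  rewrite mulr_sumr -big_split -sumrB /=; apply: eq_bigr => a _.
  by rewrite mulr_sumr -big_split -sumrB /=; apply: eq_bigr => b _; ring.
by rewrite expand arrive depart; field.
Qed.

Lemma normD2_ge0 (W : 'cV[R]_n) : 0 <= normD2 pi W.
Proof. by apply: sumr_ge0 => s _; rewrite mulr_ge0 ?sqr_ge0 // hpi.1. Qed.

Lemma dir2_ge0 k (W : 'cV[R]_n) : 0 <= dir2 P pi k W.
Proof.
rewrite /dir2 mulr_ge0 ?invr_ge0 ?ler0n //.
have [pi0 _] := hpi; have [Pk0 _] := stochastic_pow k.
apply: sumr_ge0 => a _; apply: sumr_ge0 => b _.
by rewrite mulr_ge0 ?sqr_ge0 // mulr_ge0.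
Qed.

End Stochastic.

Section Quadratic.
Variables (R : realType) (K : nat).

Lemma qform_sym (B : 'M[R]_K) x : qform (2^-1 *: (B + B^T)) x = qform B x.
Proof.
rewrite /qform.
have tr : (x^T *m B^T *m x) 0 0 = (x^T *m B *m x) 0 0.
  rewrite (_ : x^T *m B^T *m x = (x^T *m B *m x)^T) ?mxE //.
  by rewrite !trmx_mul trmxK mulmxA.
rewrite -scalemxAr -scalemxAl mulmxDr mulmxDl mxE mxE tr.
by field.
Qed.

Lemma gradient_splitting_linear (B : 'M[R]_K) (a : 'cV[R]_K)
    (h : 'cV[R]_K -> 'cV[R]_K) (f : 'cV[R]_K -> R) :
  (forall theta, h theta = B *m (theta - a)) ->
  (forall theta, f theta = qform B (theta - a)) ->
  (forall theta, 0 <= f theta) ->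
  gradient_splitting h f.
Proof.
move=> hE fE f0; exists (2^-1 *: (B + B^T)), a, B.
split; [split|split; [|split]] => //.
- by apply/matrixP => i j; rewrite !mxE addrC.
- by move=> x; rewrite qform_sym -[x](addrK a) -fE.
- by move=> theta; rewrite qform_sym fE.
- by rewrite scalerA mulrC mulVf ?scale1r // pnatr_eq0.
Qed.

End Quadratic.

Section TDlambda.
Variables (R : realType) (n K : nat) (P : 'M[R]_n) (pi : 'rV[R]_n).
Variables (Rv : 'cV[R]_n) (Phi : 'M[R]_(n, K)) (gamma lambda : R).
Hypotheses (hP : stochastic P) (hpi : stationary_distribution P pi).
Hypotheses (hgamma : 0 < gamma < 1) (hlambda : 0 <= lambda <= 1).

Definition weight (m : nat) : R := lambda ^+ m * gamma ^+ m.+1.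

Definition occupancy : 'M[R]_n := Defs.mseries (fun m => weight m *: P ^+ m.+1).

Lemma weight_ge0 m : 0 <= weight m.
Proof.
have /andP[g0 _] := hgamma; have /andP[l0 _] := hlambda.
by rewrite /weight mulr_ge0 // exprn_ge0 // ltW.
Qed.

Lemma weight_geometric m : weight m = gamma * (lambda * gamma) ^+ m.
Proof. by rewrite /weight exprMn exprS; ring. Qed.

Lemma weight_ratio : 0 <= lambda * gamma < 1.
Proof.
have /andP[g0 g1] := hgamma; have /andP[l0 l1] := hlambda.
by apply/andP; split; nra.
Qed.

Lemma cvg_weight : cvgn (series weight).
Proof.
apply: (@cvg_series_geometric_dom _ gamma _ _ weight_ratio) => k.
by rewrite ger0_norm ?weight_ge0 // weight_geometric.
Qed.

Lemma rseries_weight : rseries weight = gamma / (1 - lambda * gamma).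
Proof.
have /andP[r0 r1] := weight_ratio.
by rewrite -rseries_geometric ?ger0_norm //; congr rseries; apply/funext => m;
  rewrite weight_geometric.
Qed.

(* The entries of c_m P^(m+1) lie in [0, c_m], so Q converges. *)
Lemma mcvg_occupancy : mcvg (fun m => weight m *: P ^+ m.+1).
Proof.
move=> i j; apply: (@cvg_series_geometric_dom _ gamma _ _ weight_ratio) => k.
have /andP[e0 e1] := stochastic_pow_entry hP k.+1 i j.
rewrite mxE normrM !ger0_norm ?weight_ge0 // -weight_geometric.
by rewrite -[leRHS]mulr1 ler_wpM2l ?weight_ge0.
Qed.

(* The linear part of the TD(lambda) operator is J |-> (1 - lambda) Q J. *)
Lemma mseries_weight_apply (J : 'cV[R]_n) :
  Defs.mseries (fun m => weight m *: (P ^+ m.+1 *m J)) = occupancy *m J.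
Proof.
rewrite -(mseries_mulr J mcvg_occupancy).2; congr Defs.mseries.
by apply/funext => m; rewrite scalemxAl.
Qed.

Let L := Phi^T *m diag_mx pi.

Lemma BlamE :
  Blam P pi Phi gamma lambda = L *m Phi - (1 - lambda) *: (L *m occupancy *m Phi).
Proof.
rewrite /Blam; congr (_ - _ *: _).
have [cL eL] := mseries_mull L mcvg_occupancy.
rewrite -eL -(mseries_mulr Phi cL).2; congr Defs.mseries.
by apply/funext => m; rewrite -scalemxAr -scalemxAl.
Qed.

Lemma xbar_affine theta :
  xbar P pi Rv Phi gamma lambda theta =
  L *m Tlam P Rv gamma lambda 0 - Blam P pi Phi gamma lambda *m theta.
Proof.
rewrite BlamE /xbar /Tlam !mseries_weight_apply mulmx0 scaler0 addr0 -/L.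
rewrite mulmxBr mulmxDr mulmxBl opprB -!scalemxAl -!scalemxAr !mulmxA.
by rewrite addrA.
Qed.

Lemma dirichlet_series (W : 'cV[R]_n) :
  cvgn (series (fun m => weight m * dir2 P pi m.+1 W)) /\
  rseries (fun m => weight m * dir2 P pi m.+1 W) =
  normD2 pi W * (gamma / (1 - lambda * gamma))
  - (W^T *m diag_mx pi *m occupancy *m W) 0 0.
Proof.
have [cl el] := mseries_mull (W^T *m diag_mx pi) mcvg_occupancy.
have [cr er] := mseries_mulr W cl; rewrite el in er.
have -> : (fun m => weight m * dir2 P pi m.+1 W) = (fun m =>
    normD2 pi W * weight m - (W^T *m diag_mx pi *m (weight m *: P ^+ m.+1) *m W) 0 0).
  apply/funext => m.
  by rewrite dir2E // -scalemxAr -scalemxAl [X in _ = _ - X]mxE; ring.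
have [c e] := rseriesB (rseriesZ (normD2 pi W) cvg_weight).1 (cr 0 0).
split => //; rewrite e (rseriesZ (normD2 pi W) cvg_weight).2 rseries_weight.
by rewrite -er [in RHS]mxE.
Qed.

Lemma flam_qform thetas theta :
  flam P pi Phi gamma lambda thetas theta =
  qform (Blam P pi Phi gamma lambda) (theta - thetas).
Proof.
have /andP[_ r1] := weight_ratio.
have d0 : 1 - gamma * lambda != 0 by rewrite mulrC subr_eq0 eq_sym lt_eqF.
rewrite /flam /qform -mulmxBr; move: (theta - thetas) => x; set W := Phi *m x.
rewrite (dirichlet_series W).2 BlamE.
have -> : x^T *m (L *m Phi - (1 - lambda) *: (L *m occupancy *m Phi)) *m x =
    W^T *m diag_mx pi *m W - (1 - lambda) *: (W^T *m diag_mx pi *m occupancy *m W).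
  by rewrite /W /L trmx_mul mulmxBr mulmxBl -scalemxAr -scalemxAl !mulmxA.
have entry (A B : 'M[R]_1) c : (A - c *: B) 0 0 = A 0 0 - c * B 0 0.
  by rewrite !mxE.
by rewrite entry -normD2E; field; rewrite mulrC in d0 *.
Qed.

Lemma flam_ge0 thetas theta : 0 <= flam P pi Phi gamma lambda thetas theta.
Proof.
have /andP[g0 g1] := hgamma; have /andP[l0 l1] := hlambda.
have coef : 1 - gamma * ((1 - lambda) / (1 - gamma * lambda)) =
            (1 - gamma) / (1 - gamma * lambda) by field; nra.
rewrite /flam coef; apply: addr_ge0; apply: mulr_ge0.
- by apply: divr_ge0; nra.
- exact: normD2_ge0 hpi _.
- by lra.
- apply: rseries_ge0; first exact: (dirichlet_series _).1.
  by move=> k; rewrite mulr_ge0 ?weight_ge0 ?(dir2_ge0 hP hpi).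
Qed.

End TDlambda.

Unset Implicit Arguments.

Theorem theorem2 (R : realType) (n K : nat) (P : 'M[R]_n) (pi : 'rV[R]_n)
  (r : 'M[R]_n) (Phi : 'M[R]_(n, K)) (gamma lambda : R) (thetas : 'cV[R]_K) :
  stochastic P -> irreducible P -> aperiodic P ->
  stationary_distribution P pi ->
  \rank Phi = K ->
  (forall s : 'I_n, \sum_(j < K) Phi s j ^+ 2 <= 1) ->
  0 < gamma < 1 ->
  0 <= lambda <= 1 ->
  xbar P pi (Rvec P r) Phi gamma lambda thetas = 0 ->
  [/\ (forall theta, - xbar P pi (Rvec P r) Phi gamma lambda theta
                     = Blam P pi Phi gamma lambda *m (theta - thetas)),
      (forall theta, flam P pi Phi gamma lambda thetas theta
                     = qform (Blam P pi Phi gamma lambda) (theta - thetas)) &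
      gradient_splitting (fun theta => - xbar P pi (Rvec P r) Phi gamma lambda theta)
                         (flam P pi Phi gamma lambda thetas)].
Proof.
move=> hP _ _ hpi _ _ hgamma hlambda hfix.
have splitting theta : - xbar P pi (Rvec P r) Phi gamma lambda theta
                       = Blam P pi Phi gamma lambda *m (theta - thetas).
  have := xbar_affine pi (Rvec P r) Phi hP hgamma hlambda thetas.
  rewrite hfix => /eqP; rewrite eq_sym subr_eq0 => /eqP offset.
  by rewrite xbar_affine // offset opprB mulmxBr.
have quadratic theta : flam P pi Phi gamma lambda thetas theta
                       = qform (Blam P pi Phi gamma lambda) (theta - thetas).
  exact: flam_qform hP hpi hgamma hlambda thetas theta.
split => //; apply: (gradient_splitting_linear splitting quadratic).
exact: flam_ge0 hP hpi hgamma hlambda thetas.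
Qed.
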